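(* For all formulas $\phi_1,\phi_2$ of Full Modal Team Logic $\mathcal{FMTL}$ and every letter $p$: $\tilde\exists p\,(\phi_1\wedge NE)\equiv(\tilde\exists p\,\phi_1)\wedge NE$; $\tilde\exists p\,(\phi_1\vee\phi_2)\equiv\tilde\exists p\,\phi_1\vee\tilde\exists p\,\phi_2$; and $\tilde\exists p\,(\phi_1\otimes\phi_2)\equiv\tilde\exists p\,\phi_1\otimes\tilde\exists p\,\phi_2$, where $\equiv$ means satisfaction by the same team models.
   Context: Kripke models $M=(W,R,V)$, $V:W\to\mathcal P(Prop)$; team models $(M,X)$, $X\subseteq W$. Formulas of $\mathcal{FMTL}$: $p,\neg p,\bot,NE,\wedge,\otimes,\vee,\Diamond,\Box$, with team semantics: $(M,X)\models p$ iff $p\in V(s)$ for all $s\in X$; $\neg p$ iff $p\notin V(s)$ for all $s\in X$; $\bot$ iff $X=\emptyset$; $NE$ iff $X\neq\emptyset$; $\wedge$ componentwise; $\vee$: one disjunct holds on $(M,X)$; $\otimes$: $X=X_1\cup X_2$ with $(M,X_i)\models\phi_i$; $\Diamond\phi$: $(M,Y)\models\phi$ for some $Y$ such that every $x\in X$ has an $R$-successor in $Y$ and every $y\in Y$ is a successor of some $x\in X$; $\Box\phi$: $(M,R[X])\models\phi$, $R[X]$ the set of successors of elements of $X$. For a set $\mathcal P$ of letters, $(M,w)\rightleftharpoons_{\mathcal P}(N,v)$: some relation containing $(w,v)$ has all pairs agreeing on $\mathcal P$ and satisfying forth and back conditions; $(M,X)\rightleftharpoons_{\mathcal P}(N,Y)$: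 each $x\in X$ is $\mathcal P$-bisimilar to some $y\in Y$ and vice versa. $Free(\phi)$ is the set of letters of $\phi$ not bound by $\tilde\exists$, with $Free(\tilde\exists p\,\phi)=Free(\phi)\setminus\{p\}$; $(M,X)\models\tilde\exists p\,\phi$ iff there is $(M',X')$ with $(M',X')\rightleftharpoons_{Free(\phi)\setminus\{p\}}(M,X)$ and $(M',X')\models\phi$. *)

From Stdlib Require Import Arith.

Definition letter := nat.

Record model := Model {
  world : Type;
  rel : world -> world -> Prop;
  val : world -> letter -> Prop
}.

Definition team (M : model) := world M -> Prop.

Inductive form :=
| FAtom : letter -> form
| FNAtom : letter -> form
| FBot : form
| FNE : form
| FAnd : form -> form -> form
| FTensor : form -> form -> form
| FOr : form -> form -> form            (* \vee (global disjunction) *)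
| FDia : form -> form
| FBox : form -> form
| FExists : letter -> form -> form.

Fixpoint is_fmtl (f : form) : Prop :=
  match f with
  | FAtom _ | FNAtom _ | FBot | FNE => True
  | FAnd a b | FTensor a b | FOr a b => is_fmtl a /\ is_fmtl b
  | FDia a | FBox a => is_fmtl a
  | FExists _ _ => False
  end.

Fixpoint free (f : form) (q : letter) : Prop :=
  match f with
  | FAtom p | FNAtom p => p = q
  | FBot | FNE => False
  | FAnd a b | FTensor a b | FOr a b => free a q \/ free b q
  | FDia a | FBox a => free a q
  | FExists p a => free a q /\ q <> p
  end.

Definition pbisim (P : letter -> Prop) (M N : model) (w : world M) (v : world N) : Prop :=
  exists Z : world M -> world N -> Prop,
    Z w v /\
    forall a b, Z a b ->
      (forall q, P q -> (val M a q <-> val N b q)) /\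
      (forall a', rel M a a' -> exists b', rel N b b' /\ Z a' b') /\
      (forall b', rel N b b' -> exists a', rel M a a' /\ Z a' b').

Definition team_pbisim (P : letter -> Prop) (M N : model) (X : team M) (Y : team N) : Prop :=
  (forall x, X x -> exists y, Y y /\ pbisim P M N x y) /\
  (forall y, Y y -> exists x, X x /\ pbisim P M N x y).

Definition image (M : model) (X : team M) : team M :=
  fun y => exists x, X x /\ rel M x y.

Fixpoint sat (M : model) (X : team M) (f : form) {struct f} : Prop :=
  match f with
  | FAtom p => forall s, X s -> val M s p
  | FNAtom p => forall s, X s -> ~ val M s p
  | FBot => forall s, ~ X s
  | FNE => exists s, X s
  | FAnd a b => sat M X a /\ sat M X b
  | FOr a b => sat M X a \/ sat M X b
  | FTensor a b => exists X1 X2 : team M,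
      (forall s, X s <-> (X1 s \/ X2 s)) /\ sat M X1 a /\ sat M X2 b
  | FDia a => exists Y : team M,
      (forall x, X x -> exists y, Y y /\ rel M x y) /\
      (forall y, Y y -> exists x, X x /\ rel M x y) /\
      sat M Y a
  | FBox a => sat M (image M X) a
  | FExists p a => exists (M' : model) (X' : team M'),
      team_pbisim (fun q => free a q /\ q <> p) M' M X' X /\ sat M' X' a
  end.

Definition equiv (f g : form) : Prop :=
  forall (M : model) (X : team M), sat M X f <-> sat M X g.

(* An FMTL formula phi is invariant under Free(phi)-bisimulation of teams.
   Hence a witness (M', X') for ~exists p phi, which is only bisimilar to
   (M, X) up to Free(phi) \ {p}, can be replaced by the model of pairs of
   bisimilar worlds of M' and M, reading p in M' and every other letter in M:
   this model still satisfies phi and is bisimilar to (M, X) for every letter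
   except p.  In this normal form ~exists p commutes with the global
   disjunction at once, NE is preserved because team bisimulation preserves
   nonemptiness, and for the tensor a split of the witness team is transported
   along the bisimulation, while two witnesses for the parts are glued by
   disjoint union of models. *)

From Stdlib Require Import Arith.

Definition bisimulation (P : letter -> Prop) (M N : model)
    (Z : world M -> world N -> Prop) : Prop :=
  forall a b, Z a b ->
    (forall q, P q -> (val M a q <-> val N b q)) /\
    (forall a', rel M a a' -> exists b', rel N b b' /\ Z a' b') /\
    (forall b', rel N b b' -> exists a', rel M a a' /\ Z a' b').

Lemma pbisim_intro (P : letter -> Prop) (M N : model) Z a b :
  bisimulation P M N Z -> Z a b -> pbisim P M N a b.
Proof. intros HZ Hab. exists Z. split; assumption. Qed.

Lemma bisimulation_pbisim (P : letter -> Prop) (M N : model) :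
  bisimulation P M N (pbisim P M N).
Proof.
  intros a b (Z & Hab & HZ).
  destruct (HZ a b Hab) as (Hval & Hforth & Hback).
  split; [exact Hval | split].
  - intros a' Ha'. destruct (Hforth a' Ha') as (b' & Hb' & Z').
    exists b'. split; [exact Hb' | exact (pbisim_intro _ _ _ Z _ _ HZ Z')].
  - intros b' Hb'. destruct (Hback b' Hb') as (a' & Ha' & Z').
    exists a'. split; [exact Ha' | exact (pbisim_intro _ _ _ Z _ _ HZ Z')].
Qed.

Section TeamBisimulation.

Context {P : letter -> Prop} {M N : model}.

Lemma pbisim_weaken (Q : letter -> Prop) a b :
  (forall q, Q q -> P q) -> pbisim P M N a b -> pbisim Q M N a b.
Proof.
  intros HQP (Z & Hab & HZ). apply (pbisim_intro _ _ _ Z); [| exact Hab].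
  intros x y Hxy. destruct (HZ x y Hxy) as (Hval & Hrel).
  split; [intros q Hq; exact (Hval q (HQP q Hq)) | exact Hrel].
Qed.

Lemma team_pbisim_weaken (Q : letter -> Prop) (X : team M) (Y : team N) :
  (forall q, Q q -> P q) -> team_pbisim P M N X Y -> team_pbisim Q M N X Y.
Proof.
  intros HQP [Hforth Hback]. split.
  - intros x Hx. destruct (Hforth x Hx) as (y & Hy & Hxy).
    exists y. split; [exact Hy | exact (pbisim_weaken Q x y HQP Hxy)].
  - intros y Hy. destruct (Hback y Hy) as (x & Hx & Hxy).
    exists x. split; [exact Hx | exact (pbisim_weaken Q x y HQP Hxy)].
Qed.

Lemma team_pbisim_inhabited (X : team M) (Y : team N) :
  team_pbisim P M N X Y -> (exists x, X x) <-> (exists y, Y y).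
Proof.
  intros [Hforth Hback]. split.
  - intros (x & Hx). destruct (Hforth x Hx) as (y & Hy & _). exists y. exact Hy.
  - intros (y & Hy). destruct (Hback y Hy) as (x & Hx & _). exists x. exact Hx.
Qed.

Lemma team_pbisim_restrict (X X' : team M) (Y : team N) :
  team_pbisim P M N X Y -> (forall x, X' x -> X x) ->
  team_pbisim P M N X' (fun y => Y y /\ exists x, X' x /\ pbisim P M N x y).
Proof.
  intros [Hforth _] HX'. split.
  - intros x Hx. destruct (Hforth x (HX' x Hx)) as (y & Hy & Hxy).
    exists y. split; [split; [exact Hy | exists x; split; assumption] | exact Hxy].
  - intros y (_ & x & Hx & Hxy). exists x. split; assumption.
Qed.

Lemma team_pbisim_split (X X1 X2 : team M) (Y : team N) :
  team_pbisim P M N X Y -> (forall s, X s <-> X1 s \/ X2 s) ->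
  exists Y1 Y2 : team N, (forall s, Y s <-> Y1 s \/ Y2 s) /\
    team_pbisim P M N X1 Y1 /\ team_pbisim P M N X2 Y2.
Proof.
  intros HT HX.
  exists (fun y => Y y /\ exists x, X1 x /\ pbisim P M N x y),
         (fun y => Y y /\ exists x, X2 x /\ pbisim P M N x y).
  split; [| split; apply (team_pbisim_restrict X); try exact HT; intros x Hx; apply HX; auto].
  intros y. split.
  - intros Hy. destruct (proj2 HT y Hy) as (x & Hx & Hxy).
    destruct (proj1 (HX x) Hx); [left | right]; split; eauto.
  - intros [[Hy _] | [Hy _]]; exact Hy.
Qed.

Lemma team_pbisim_image (X : team M) (Y : team N) :
  team_pbisim P M N X Y -> team_pbisim P M N (image M X) (image N Y).
Proof.
  intros [Hforth Hback]. split.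
  - intros a (x & Hx & Hxa). destruct (Hforth x Hx) as (y & Hy & Hxy).
    destruct (proj1 (proj2 (bisimulation_pbisim _ _ _ _ _ Hxy)) a Hxa) as (b & Hyb & Hab).
    exists b. split; [exists y; split; assumption | exact Hab].
  - intros b (y & Hy & Hyb). destruct (Hback y Hy) as (x & Hx & Hxy).
    destruct (proj2 (proj2 (bisimulation_pbisim _ _ _ _ _ Hxy)) b Hyb) as (a & Hxa & Hab).
    exists a. split; [exists x; split; assumption | exact Hab].
Qed.

Lemma team_pbisim_successors (X X' : team M) (Y : team N) :
  team_pbisim P M N X Y ->
  (forall x, X x -> exists x', X' x' /\ rel M x x') ->
  (forall x', X' x' -> exists x, X x /\ rel M x x') ->
  exists Y' : team N,
    (forall y, Y y -> exists y', Y' y' /\ rel N y y') /\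
    (forall y', Y' y' -> exists y, Y y /\ rel N y y') /\
    team_pbisim P M N X' Y'.
Proof.
  intros HT Hsucc Hpred.
  assert (HX' : forall x', X' x' -> image M X x').
  { intros x' Hx'. destruct (Hpred x' Hx') as (x & Hx & Hxx'). exists x. split; assumption. }
  exists (fun y' => image N Y y' /\ exists x', X' x' /\ pbisim P M N x' y').
  split; [| split].
  - intros y Hy. destruct (proj2 HT y Hy) as (x & Hx & Hxy).
    destruct (Hsucc x Hx) as (x' & Hx' & Hxx').
    destruct (proj1 (proj2 (bisimulation_pbisim _ _ _ _ _ Hxy)) x' Hxx') as (y' & Hyy' & Hxy').
    exists y'. split; [| exact Hyy'].
    split; [exists y; split; assumption | exists x'; split; assumption].
  - intros y' ((y & Hy & Hyy') & _). exists y. split; assumption.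
  - exact (team_pbisim_restrict _ _ _ (team_pbisim_image X Y HT) HX').
Qed.

End TeamBisimulation.

Theorem sat_team_pbisim (phi : form) :
  is_fmtl phi -> forall (P : letter -> Prop) (M N : model) (X : team M) (Y : team N),
  (forall q, free phi q -> P q) -> team_pbisim P M N X Y -> sat M X phi -> sat N Y phi.
Proof.
  induction phi as [l | l | | | phi1 IH1 phi2 IH2 | phi1 IH1 phi2 IH2 | phi1 IH1 phi2 IH2
                   | phi IH | phi IH | l phi _];
    simpl; intros Hphi P M N X Y Hfree HT Hsat.
  - intros s Hs. destruct (proj2 HT s Hs) as (x & Hx & Hxs).
    apply (proj1 (bisimulation_pbisim _ _ _ _ _ Hxs) l (Hfree l eq_refl)), Hsat, Hx.
  - intros s Hs. destruct (proj2 HT s Hs) as (x & Hx & Hxs).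
    rewrite <- (proj1 (bisimulation_pbisim _ _ _ _ _ Hxs) l (Hfree l eq_refl)).
    apply Hsat, Hx.
  - intros s Hs. destruct (proj2 HT s Hs) as (x & Hx & _). exact (Hsat x Hx).
  - exact (proj1 (team_pbisim_inhabited X Y HT) Hsat).
  - destruct Hphi as [Hphi1 Hphi2]. destruct Hsat as [Hsat1 Hsat2]. split.
    + exact (IH1 Hphi1 P M N X Y (fun q Hq => Hfree q (or_introl Hq)) HT Hsat1).
    + exact (IH2 Hphi2 P M N X Y (fun q Hq => Hfree q (or_intror Hq)) HT Hsat2).
  - destruct Hphi as [Hphi1 Hphi2]. destruct Hsat as (X1 & X2 & HX & Hsat1 & Hsat2).
    destruct (team_pbisim_split X X1 X2 Y HT HX) as (Y1 & Y2 & HY & HT1 & HT2).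
    exists Y1, Y2. split; [exact HY | split].
    + exact (IH1 Hphi1 P M N X1 Y1 (fun q Hq => Hfree q (or_introl Hq)) HT1 Hsat1).
    + exact (IH2 Hphi2 P M N X2 Y2 (fun q Hq => Hfree q (or_intror Hq)) HT2 Hsat2).
  - destruct Hphi as [Hphi1 Hphi2]. destruct Hsat as [Hsat1 | Hsat2].
    + left. exact (IH1 Hphi1 P M N X Y (fun q Hq => Hfree q (or_introl Hq)) HT Hsat1).
    + right. exact (IH2 Hphi2 P M N X Y (fun q Hq => Hfree q (or_intror Hq)) HT Hsat2).
  - destruct Hsat as (X' & Hsucc & Hpred & Hsat).
    destruct (team_pbisim_successors X X' Y HT Hsucc Hpred) as (Y' & Hsucc' & Hpred' & HT').
    exists Y'. split; [exact Hsucc' | split; [exact Hpred' |]].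
    exact (IH Hphi P M N X' Y' Hfree HT' Hsat).
  - exact (IH Hphi P M N _ _ Hfree (team_pbisim_image X Y HT) Hsat).
  - contradiction.
Qed.

Section PairModel.

Variables (M M1 : model) (P : letter -> Prop) (p : letter).

(* Only P-bisimilar pairs are worlds, so that a step of either component can be
   matched by a step of the other. *)
Definition pair_model : model := Model
  { x : world M1 * world M | pbisim P M1 M (fst x) (snd x) }
  (fun s t => rel M1 (fst (proj1_sig s)) (fst (proj1_sig t)) /\
              rel M (snd (proj1_sig s)) (snd (proj1_sig t)))
  (fun s q => if Nat.eq_dec q p then val M1 (fst (proj1_sig s)) q
              else val M (snd (proj1_sig s)) q).

Definition pair_world (a : world M1) (b : world M) (Hab : pbisim P M1 M a b) :
  world pair_model := exist _ (a, b) Hab.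

Lemma bisimulation_pair_snd :
  bisimulation (fun q => q <> p) pair_model M (fun s b => snd (proj1_sig s) = b).
Proof.
  intros [[a b] Hab] b' <-. simpl.
  split; [| split].
  - intros q Hq. destruct (Nat.eq_dec q p); [contradiction | reflexivity].
  - intros t [_ Hbt]. exists (snd (proj1_sig t)). split; [exact Hbt | reflexivity].
  - intros c Hbc.
    destruct (proj2 (proj2 (bisimulation_pbisim _ _ _ _ _ Hab)) c Hbc) as (a' & Haa' & Ha'c).
    exists (pair_world a' c Ha'c). split; [split; assumption | reflexivity].
Qed.

Lemma bisimulation_pair_fst (F : letter -> Prop) :
  (forall q, F q -> q <> p -> P q) ->
  bisimulation F M1 pair_model (fun a s => fst (proj1_sig s) = a).
Proof.
  intros HFP a' [[a b] Hab] <-. simpl.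
  destruct (bisimulation_pbisim _ _ _ _ _ Hab) as (Hval & Hforth & _).
  split; [| split].
  - intros q Hq. destruct (Nat.eq_dec q p) as [_ | Hqp]; [reflexivity |].
    exact (Hval q (HFP q Hq Hqp)).
  - intros a2 Haa2. destruct (Hforth a2 Haa2) as (b2 & Hbb2 & Ha2b2).
    exists (pair_world a2 b2 Ha2b2). split; [split; assumption | reflexivity].
  - intros t [Hat _]. exists (fst (proj1_sig t)). split; [exact Hat | reflexivity].
Qed.

Definition pair_team (Y : team M1) (X : team M) : team pair_model :=
  fun s => Y (fst (proj1_sig s)) /\ X (snd (proj1_sig s)).

Lemma team_pbisim_pair_snd (Y : team M1) (X : team M) :
  team_pbisim P M1 M Y X -> team_pbisim (fun q => q <> p) pair_model M (pair_team Y X) X.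
Proof.
  intros [_ Hback].
  assert (Hsnd : forall s, pbisim (fun q => q <> p) pair_model M s (snd (proj1_sig s))).
  { intros s. exact (pbisim_intro _ _ _ _ _ _ bisimulation_pair_snd eq_refl). }
  split.
  - intros s [_ Hs]. exists (snd (proj1_sig s)). split; [exact Hs | apply Hsnd].
  - intros x Hx. destruct (Hback x Hx) as (y & Hy & Hyx).
    exists (pair_world y x Hyx). split; [split; assumption | exact (Hsnd (pair_world y x Hyx))].
Qed.

Lemma team_pbisim_pair_fst (F : letter -> Prop) (Y : team M1) (X : team M) :
  (forall q, F q -> q <> p -> P q) ->
  team_pbisim P M1 M Y X -> team_pbisim F M1 pair_model Y (pair_team Y X).
Proof.
  intros HFP [Hforth _].
  assert (Hfst : forall s, pbisim F M1 pair_model (fst (proj1_sig s)) s).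
  { intros s. exact (pbisim_intro _ _ _ _ _ _ (bisimulation_pair_fst F HFP) eq_refl). }
  split.
  - intros y Hy. destruct (Hforth y Hy) as (x & Hx & Hyx).
    exists (pair_world y x Hyx). split; [split; assumption | exact (Hfst (pair_world y x Hyx))].
  - intros s [Hs _]. exists (fst (proj1_sig s)). split; [exact Hs | apply Hfst].
Qed.

End PairModel.

Definition sat_some_variant (p : letter) (M : model) (X : team M) (phi : form) : Prop :=
  exists (M' : model) (X' : team M'),
    team_pbisim (fun q => q <> p) M' M X' X /\ sat M' X' phi.

Theorem sat_FExists_variant (p : letter) (phi : form) (M : model) (X : team M) :
  is_fmtl phi -> sat M X (FExists p phi) <-> sat_some_variant p M X phi.
Proof.
  intros Hphi. split.
  - intros (M1 & Y & HT & Hsat).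
    set (P := fun q => free phi q /\ q <> p).
    exists (pair_model M M1 P p), (pair_team M M1 P p Y X).
    split; [exact (team_pbisim_pair_snd M M1 P p Y X HT) |].
    apply (sat_team_pbisim phi Hphi (free phi) M1 _ Y _ (fun q Hq => Hq)); [| exact Hsat].
    apply team_pbisim_pair_fst; [intros q Hq Hqp; split; assumption | exact HT].
  - intros (M' & X' & HT & Hsat). exists M', X'. split; [| exact Hsat].
    exact (team_pbisim_weaken _ X' X (fun q Hq => proj2 Hq) HT).
Qed.

Section SumModel.

Variables A B : model.

Definition sum_model : model := Model (world A + world B)
  (fun s t => match s, t with
              | inl a, inl a' => rel A a a'
              | inr b, inr b' => rel B b b'
              | _, _ => False
              end)
  (fun s q => match s with inl a => val A a q | inr b => val B b q end).

Definition sum_team (XA : team A) (XB : team B) : team sum_model :=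
  fun s => match s with inl a => XA a | inr b => XB b end.

Lemma bisimulation_inl (P : letter -> Prop) :
  bisimulation P A sum_model (fun a s => s = inl a).
Proof.
  intros a s ->. split; [| split].
  - intros q _. reflexivity.
  - intros a' Haa'. exists (inl a'). split; [exact Haa' | reflexivity].
  - intros [a' | b'] Hs; [| contradiction]. exists a'. split; [exact Hs | reflexivity].
Qed.

Lemma bisimulation_inr (P : letter -> Prop) :
  bisimulation P B sum_model (fun b s => s = inr b).
Proof.
  intros b s ->. split; [| split].
  - intros q _. reflexivity.
  - intros b' Hbb'. exists (inr b'). split; [exact Hbb' | reflexivity].
  - intros [a' | b'] Hs; [contradiction |]. exists b'. split; [exact Hs | reflexivity].
Qed.

Lemma bisimulation_sum (P : letter -> Prop) (M : model) :
  bisimulation P sum_model M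
    (fun s m => match s with inl a => pbisim P A M a m | inr b => pbisim P B M b m end).
Proof.
  intros [a | b] m Hm; destruct (bisimulation_pbisim _ _ _ _ _ Hm) as (Hval & Hforth & Hback);
    (split; [exact Hval | split]).
  - intros [a' | b'] Hs; [exact (Hforth a' Hs) | contradiction].
  - intros m' Hmm'. destruct (Hback m' Hmm') as (a' & Haa' & Ha'm').
    exists (inl a'). split; assumption.
  - intros [a' | b'] Hs; [contradiction | exact (Hforth b' Hs)].
  - intros m' Hmm'. destruct (Hback m' Hmm') as (b' & Hbb' & Hb'm').
    exists (inr b'). split; assumption.
Qed.

Lemma team_pbisim_sum (P : letter -> Prop) (M : model) (XA : team A) (XB : team B)
    (X X1 X2 : team M) :
  team_pbisim P A M XA X1 -> team_pbisim P B M XB X2 ->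
  (forall s, X s <-> X1 s \/ X2 s) -> team_pbisim P sum_model M (sum_team XA XB) X.
Proof.
  intros [HAforth HAback] [HBforth HBback] HX.
  assert (Hinl : forall a m, pbisim P A M a m -> pbisim P sum_model M (inl a) m).
  { intros a m. exact (pbisim_intro _ sum_model M _ (inl a) m (bisimulation_sum P M)). }
  assert (Hinr : forall b m, pbisim P B M b m -> pbisim P sum_model M (inr b) m).
  { intros b m. exact (pbisim_intro _ sum_model M _ (inr b) m (bisimulation_sum P M)). }
  split.
  - intros [a | b] Hs.
    + destruct (HAforth a Hs) as (x & Hx & Hax).
      exists x. split; [apply HX; left; exact Hx | exact (Hinl a x Hax)].
    + destruct (HBforth b Hs) as (x & Hx & Hbx).
      exists x. split; [apply HX; right; exact Hx | exact (Hinr b x Hbx)].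
  - intros x Hx. destruct (proj1 (HX x) Hx) as [Hx1 | Hx2].
    + destruct (HAback x Hx1) as (a & Ha & Hax).
      exists (inl a). split; [exact Ha | exact (Hinl a x Hax)].
    + destruct (HBback x Hx2) as (b & Hb & Hbx).
      exists (inr b). split; [exact Hb | exact (Hinr b x Hbx)].
Qed.

Lemma team_pbisim_sum_inl (P : letter -> Prop) (XA : team A) :
  team_pbisim P A sum_model XA (sum_team XA (fun _ => False)).
Proof.
  assert (Hinl : forall a, pbisim P A sum_model a (inl a)).
  { intros a. exact (pbisim_intro _ _ _ _ _ _ (bisimulation_inl P) eq_refl). }
  split.
  - intros a Ha. exists (inl a). split; [exact Ha | apply Hinl].
  - intros [a | b] Hs; [| contradiction]. exists a. split; [exact Hs | apply Hinl].
Qed.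

Lemma team_pbisim_sum_inr (P : letter -> Prop) (XB : team B) :
  team_pbisim P B sum_model XB (sum_team (fun _ => False) XB).
Proof.
  assert (Hinr : forall b, pbisim P B sum_model b (inr b)).
  { intros b. exact (pbisim_intro _ _ _ _ _ _ (bisimulation_inr P) eq_refl). }
  split.
  - intros b Hb. exists (inr b). split; [exact Hb | apply Hinr].
  - intros [a | b] Hs; [contradiction |]. exists b. split; [exact Hs | apply Hinr].
Qed.

End SumModel.

Lemma equiv_FExists_FAnd_FNE (p : letter) (phi : form) :
  is_fmtl phi -> equiv (FExists p (FAnd phi FNE)) (FAnd (FExists p phi) FNE).
Proof.
  intros Hphi M X.
  change (sat M X (FAnd (FExists p phi) FNE)) with (sat M X (FExists p phi) /\ exists x, X x).
  rewrite (sat_FExists_variant p phi) by exact Hphi.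
  rewrite (sat_FExists_variant p (FAnd phi FNE)) by (split; [exact Hphi | exact I]).
  split.
  - intros (M' & X' & HT & Hsat & Hne). split.
    + exists M', X'. split; assumption.
    + exact (proj1 (team_pbisim_inhabited X' X HT) Hne).
  - intros [(M' & X' & HT & Hsat) Hne]. exists M', X'.
    split; [exact HT | split; [exact Hsat | exact (proj2 (team_pbisim_inhabited X' X HT) Hne)]].
Qed.

Lemma equiv_FExists_FOr (p : letter) (phi1 phi2 : form) :
  is_fmtl phi1 -> is_fmtl phi2 ->
  equiv (FExists p (FOr phi1 phi2)) (FOr (FExists p phi1) (FExists p phi2)).
Proof.
  intros Hphi1 Hphi2 M X.
  change (sat M X (FOr (FExists p phi1) (FExists p phi2)))
    with (sat M X (FExists p phi1) \/ sat M X (FExists p phi2)).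
  rewrite (sat_FExists_variant p phi1), (sat_FExists_variant p phi2) by assumption.
  rewrite (sat_FExists_variant p (FOr phi1 phi2)) by (split; assumption).
  split.
  - intros (M' & X' & HT & [Hsat | Hsat]); [left | right]; exists M', X'; split; assumption.
  - intros [(M' & X' & HT & Hsat) | (M' & X' & HT & Hsat)];
      exists M', X'; split; [exact HT | left; exact Hsat | exact HT | right; exact Hsat].
Qed.

Lemma equiv_FExists_FTensor (p : letter) (phi1 phi2 : form) :
  is_fmtl phi1 -> is_fmtl phi2 ->
  equiv (FExists p (FTensor phi1 phi2)) (FTensor (FExists p phi1) (FExists p phi2)).
Proof.
  intros Hphi1 Hphi2 M X.
  change (sat M X (FTensor (FExists p phi1) (FExists p phi2)))
    with (exists X1 X2 : team M, (forall s, X s <-> X1 s \/ X2 s) /\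
            sat M X1 (FExists p phi1) /\ sat M X2 (FExists p phi2)).
  rewrite (sat_FExists_variant p (FTensor phi1 phi2)) by (split; assumption).
  split.
  - intros (M' & X' & HT & X1' & X2' & HX' & Hsat1 & Hsat2).
    destruct (team_pbisim_split X' X1' X2' X HT HX') as (X1 & X2 & HX & HT1 & HT2).
    exists X1, X2. split; [exact HX |].
    rewrite (sat_FExists_variant p phi1), (sat_FExists_variant p phi2) by assumption.
    split; [exists M', X1' | exists M', X2']; split; assumption.
  - intros (X1 & X2 & HX & Hsat1 & Hsat2).
    rewrite (sat_FExists_variant p phi1) in Hsat1 by exact Hphi1.
    rewrite (sat_FExists_variant p phi2) in Hsat2 by exact Hphi2.
    destruct Hsat1 as (A & XA & HTA & HsatA), Hsat2 as (B & XB & HTB & HsatB).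
    exists (sum_model A B), (sum_team A B XA XB).
    split; [exact (team_pbisim_sum A B _ M XA XB X X1 X2 HTA HTB HX) |].
    exists (sum_team A B XA (fun _ => False)), (sum_team A B (fun _ => False) XB).
    split; [intros [a | b]; simpl; tauto | split].
    + exact (sat_team_pbisim phi1 Hphi1 (fun _ => True) _ _ _ _ (fun _ _ => I)
               (team_pbisim_sum_inl A B _ XA) HsatA).
    + exact (sat_team_pbisim phi2 Hphi2 (fun _ => True) _ _ _ _ (fun _ _ => I)
               (team_pbisim_sum_inr A B _ XB) HsatB).
Qed.

Theorem mainTheorem8 : forall (phi1 phi2 : form) (p : letter),
  is_fmtl phi1 -> is_fmtl phi2 ->
  equiv (FExists p (FAnd phi1 FNE)) (FAnd (FExists p phi1) FNE) /\
  equiv (FExists p (FOr phi1 phi2)) (FOr (FExists p phi1) (FExists p phi2)) /\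
  equiv (FExists p (FTensor phi1 phi2)) (FTensor (FExists p phi1) (FExists p phi2)).
Proof.
  intros phi1 phi2 p Hphi1 Hphi2.
  split; [| split].
  - exact (equiv_FExists_FAnd_FNE p phi1 Hphi1).
  - exact (equiv_FExists_FOr p phi1 phi2 Hphi1 Hphi2).
  - exact (equiv_FExists_FTensor p phi1 phi2 Hphi1 Hphi2).
Qed.
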